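(* Let $q\ge 2$ be an integer and let $\mathcal{R}$ be a finite family of axis-parallel rectangles in general position such that every pair of intersecting rectangles in $\mathcal{R}$ has a corner intersection and no $q+1$ rectangles of $\mathcal{R}$ are pairwise intersecting. Then the arrangement graph $A_{\mathcal{R}}$ satisfies $|V(A_{\mathcal{R}})|\le 4q\cdot|\mathcal{R}|$.
   Context: Rectangles are closed axis-parallel rectangles $X\times Y$; general position means all specifying intervals have pairwise distinct endpoints. Two intersecting rectangles have a corner intersection if one contains one or two corners of the other but neither contains the other (then their boundaries meet exactly twice). A joint is a point where the boundaries of two distinct rectangles of $\mathcal{R}$ intersect. The arrangement graph $A_{\mathcal{R}}$ has the joints as vertices, and $\{u,v\}$ is an edge iff $u,v$ are joints on the boundary of some rectangle of $\mathcal{R}$ with no other joint on that boundary between them. *)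

From HB Require Import structures.
From mathcomp Require Import all_boot all_order all_algebra.
From mathcomp Require Import reals.
Set Implicit Arguments. Unset Strict Implicit. Unset Printing Implicit Defensive.
Import Order.TTheory GRing.Theory Num.Theory.
Local Open Scope ring_scope.

(* A closed axis-parallel rectangle [rx1, rx2] x [ry1, ry2]. *)
Record rect (R : realType) := Rect { rx1 : R; rx2 : R; ry1 : R; ry2 : R }.

Section Rects.
Variable R : realType.
Implicit Types (r s : rect R) (p : R * R).

Definition rect_wf r : Prop := rx1 r < rx2 r /\ ry1 r < ry2 r.

Definition in_rect r p : bool :=
  (rx1 r <= p.1 <= rx2 r) && (ry1 r <= p.2 <= ry2 r).

Definition on_boundary r p : bool :=
  in_rect r p &&
  [|| p.1 == rx1 r, p.1 == rx2 r, p.2 == ry1 r | p.2 == ry2 r].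

Definition corners r : seq (R * R) :=
  [:: (rx1 r, ry1 r); (rx1 r, ry2 r); (rx2 r, ry1 r); (rx2 r, ry2 r)].

Definition rects_intersect r s : Prop := exists p, in_rect r p && in_rect s p.

Definition rect_contains r s : Prop := forall p, in_rect s p -> in_rect r p.

Definition n_corners_in r s : nat := count (in_rect r) (corners s).

Definition corner_intersection r s : Prop :=
  rects_intersect r s /\
  ((n_corners_in r s = 1%N \/ n_corners_in r s = 2%N) \/
   (n_corners_in s r = 1%N \/ n_corners_in s r = 2%N)) /\
  ~ rect_contains r s /\ ~ rect_contains s r.
End Rects.

Definition general_position (R : realType) (n : nat) (F : 'I_n -> rect R) : Prop :=
  uniq (flatten [seq [:: rx1 (F i); rx2 (F i)] | i <- enum 'I_n]) /\
  uniq (flatten [seq [:: ry1 (F i); ry2 (F i)] | i <- enum 'I_n]).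

(* joint: a point where the boundaries of two distinct rectangles meet;
   these are the vertices of the arrangement graph A_R *)
Definition is_joint (R : realType) (n : nat) (F : 'I_n -> rect R) (p : R * R) : Prop :=
  exists i j : 'I_n, i != j /\ on_boundary (F i) p /\ on_boundary (F j) p.

From HB Require Import structures.
From mathcomp Require Import all_boot all_order all_algebra.
From mathcomp Require Import reals.
Set Implicit Arguments. Unset Strict Implicit. Unset Printing Implicit Defensive.
Import Order.TTheory GRing.Theory Num.Theory.
Local Open Scope ring_scope.

(* Each joint lies on a vertical side of one rectangle and a horizontal side
   of the other, so the joints of a pair r, s are among the crossings of the
   vertical sides of r with the horizontal sides of s and vice versa.  For a
   corner intersection the number of these crossings equals the number of
   corners of one rectangle contained in the other.  Hence the number of joints
   is at most the number of pairs (corner c of s, rectangle r containing c); the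
   rectangles containing a point pairwise intersect, so each of the 4|R| corners
   lies in at most q rectangles. *)

Lemma flatten_map_uniq_disjoint (I T : eqType) (f : I -> seq T) (l : seq I) i j x :
  uniq (flatten [seq f k | k <- l]) -> i \in l -> j \in l -> i != j ->
  x \in f i -> x \notin f j.
Proof.
elim: l => [//|k l IHl] /=; rewrite cat_uniq => /and3P[_ disj ul].
have outside_k y k' : k' \in l -> y \in f k' -> y \notin f k.
  move=> k'l yk'; apply: contra disj => yk; apply/hasP; exists y => //.
  by apply/flatten_mapP; exists k'.
rewrite !inE => /predU1P[-> | il] /predU1P[-> | jl] ij xi //.
- by rewrite eqxx in ij.
- by apply/negP => xj; move: (outside_k x j jl xj); rewrite xi.
- exact: outside_k xi.
- exact: IHl.
Qed.

Lemma sum_count_exchange (I : finType) (T : Type) (P : I -> pred T) (s : seq T) :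
  (\sum_i count (P i) s = \sum_(x <- s) #|[set i | P i x]|)%N.
Proof.
under eq_bigr do rewrite -sum1_count big_mkcond.
rewrite exchange_big /=; apply: eq_bigr => x _.
by rewrite -sum1_card [RHS]big_mkcond; apply: eq_bigr => i _; rewrite inE.
Qed.

Lemma sum_symmetric_le (I : finType) (P : rel I) (f g : I -> I -> nat) :
  symmetric P -> (forall a b, P a b -> f a b + f b a <= g a b + g b a)%N ->
  (\sum_a \sum_(b | P a b) f a b <= \sum_a \sum_(b | P a b) g a b)%N.
Proof.
move=> symP fg.
have swap h : (\sum_a \sum_(b | P a b) h b a = \sum_a \sum_(b | P a b) h a b)%N.
  rewrite (exchange_big_dep predT) //=.
  by apply: eq_bigr => a _; apply: eq_bigl => b; rewrite symP.
have double h : (\sum_a \sum_(b | P a b) (h a b + h b a) =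
                 (\sum_a \sum_(b | P a b) h a b).*2)%N.
  by under eq_bigr do rewrite big_split; rewrite big_split /= swap addnn.
rewrite -leq_double -!double.
by apply: leq_sum => a _; apply: leq_sum => b; apply: fg.
Qed.

Section Crossings.
Variable R : realType.
Implicit Types (r s : rect R) (p : R * R).

Definition cross_points r s : seq (R * R) :=
  [:: (rx1 r, ry1 s); (rx1 r, ry2 s); (rx2 r, ry1 s); (rx2 r, ry2 s)].

Definition crossings r s : seq (R * R) :=
  [seq p <- cross_points r s | in_rect r p && in_rect s p].

Definition endpoints_apart r s : bool :=
  [&& rx1 r != rx1 s, rx1 r != rx2 s, rx2 r != rx1 s & rx2 r != rx2 s] &&
  [&& ry1 r != ry1 s, ry1 r != ry2 s, ry2 r != ry1 s & ry2 r != ry2 s].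

Lemma mem_crossings_on_boundary r s p :
  p \in crossings r s -> on_boundary r p && on_boundary s p.
Proof.
rewrite mem_filter /on_boundary => /andP[/andP[-> ->]].
by rewrite !inE => /or4P[] /eqP-> /=; rewrite !eqxx ?orbT.
Qed.

Lemma on_boundary_mem_crossings r s p :
  endpoints_apart r s -> on_boundary r p -> on_boundary s p ->
  p \in crossings r s ++ crossings s r.
Proof.
case: p => x y /andP[/and4P[x11 x12 x21 x22] /and4P[y11 y12 y21 y22]].
move=> /andP[inr /or4P[]/eqP /= Er] /andP[ins /or4P[]/eqP /= Es].
all: rewrite mem_cat !mem_filter inr ins /= !inE.
all: try by rewrite Er Es !eqxx ?orbT.
all: by move: x11 x12 x21 x22 y11 y12 y21 y22; rewrite -Er -Es eqxx.
Qed.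

Lemma crossings_le_corners r s :
  rect_wf r -> rect_wf s -> endpoints_apart r s ->
  (rects_intersect r s -> corner_intersection r s) ->
  (size (crossings r s) + size (crossings s r) <=
   n_corners_in r s + n_corners_in s r)%N.
Proof.
move=> wfr wfs apart corner.
have meet : (0 < size (crossings r s) + size (crossings s r))%N ->
    rects_intersect r s.
  by rewrite addn_gt0 !size_filter -!has_count => /orP[] /hasP[p _];
    [|rewrite andbC]; exists p.
have {meet corner} few_corners := fun h => proj1 (proj2 (corner (meet h))).
move: r s wfr wfs apart few_corners => [a1 a2 c1 c2] [b1 b2 d1 d2] /= [ha hc] [hb hd].
case/andP=> /and4P[x11 x12 x21 x22] /and4P[y11 y12 y21 y22].
have le_flip (u v : R) : u != v -> (u <= v) = ~~ (v <= u).
  by move=> uv; rewrite -ltNge lt_neqAle uv.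
rewrite !size_filter /n_corners_in /cross_points /corners /in_rect /=.
rewrite !lexx !(ltW ha) !(ltW hb) !(ltW hc) !(ltW hd) /=.
rewrite ?(le_flip _ _ x11) ?(le_flip _ _ x12) ?(le_flip _ _ x21) ?(le_flip _ _ x22).
rewrite ?(le_flip _ _ y11) ?(le_flip _ _ y12) ?(le_flip _ _ y21) ?(le_flip _ _ y22).
have le_trans_r (u v w : R) : v <= w -> (u <= v) ==> (u <= w).
  by move=> vw; apply/implyP => /le_trans; apply.
have le_trans_l (u v w : R) : u <= v -> (v <= w) ==> (u <= w).
  by move=> uv; apply/implyP; apply: le_trans.
(* Only the eight comparisons b_k <= a_l, d_k <= c_l remain; we enumerate
   them, keeping the orders consistent with a1 < a2, b1 < b2, c1 < c2,
   d1 < d2.  Whenever the left side is positive the rectangles meet, and the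
   corner-intersection count rules out the patterns (such as a cross) where it
   exceeds the right side. *)
move: (le_trans_l _ _ a1 (ltW hb)) (le_trans_l _ _ a2 (ltW hb)).
move: (le_trans_r b1 _ _ (ltW ha)) (le_trans_r b2 _ _ (ltW ha)).
move: (le_trans_l _ _ c1 (ltW hd)) (le_trans_l _ _ c2 (ltW hd)).
move: (le_trans_r d1 _ _ (ltW hc)) (le_trans_r d2 _ _ (ltW hc)).
move: (b1 <= a1) (b2 <= a1) (b1 <= a2) (b2 <= a2).
move: (d1 <= c1) (d2 <= c1) (d1 <= c2) (d2 <= c2).
clear.
by do 8![case] => //=; move=> *;
  repeat match goal with H : _ \/ _ |- _ => case: H => // end;
  match goal with H : _ -> _ |- _ => case: (H isT) => [[]|[]] end.
Qed.
End Crossings.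

Section Family.
Variables (R : realType) (n : nat) (F : 'I_n -> rect R).

Lemma general_position_endpoints_apart i j :
  general_position F -> i != j -> endpoints_apart (F i) (F j).
Proof.
case=> gx gy ij.
have neq (f : 'I_n -> seq R) u v : uniq (flatten [seq f k | k <- enum 'I_n]) ->
    u \in f i -> v \in f j -> u != v.
  move=> uf ui vj; apply/eqP => uv.
  have := flatten_map_uniq_disjoint uf (mem_enum _ i) (mem_enum _ j) ij ui.
  by rewrite uv vj.
apply/andP; split; apply/and4P; split.
1-4: apply: neq gx _ _; by rewrite !inE eqxx ?orbT.
all: apply: neq gy _ _; by rewrite !inE eqxx ?orbT.
Qed.

Definition joint_candidates : seq (R * R) :=
  flatten [seq flatten [seq crossings (F a) (F b) | b <- index_enum 'I_n & a != b]
          | a <- index_enum 'I_n].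

Lemma size_joint_candidates :
  size joint_candidates = (\sum_a \sum_(b | a != b) size (crossings (F a) (F b)))%N.
Proof.
rewrite size_flatten sumnE !big_map; apply: eq_bigr => a _.
by rewrite size_flatten sumnE !big_map big_filter.
Qed.

Lemma mem_joint_candidates p :
  (forall i j, i != j -> endpoints_apart (F i) (F j)) ->
  p \in joint_candidates <-> is_joint F p.
Proof.
move=> apart; split.
  case/flatten_mapP=> a _ /flatten_mapP[b]; rewrite mem_filter => /andP[ab _].
  by case/mem_crossings_on_boundary/andP; exists a, b.
case=> [i [j [ij [bi bj]]]].
have crossing a b : a != b -> p \in crossings (F a) (F b) -> p \in joint_candidates.
  move=> ab pab; apply/flatten_mapP; exists a; first exact: mem_index_enum.
  by apply/flatten_mapP; exists b; rewrite // mem_filter ab mem_index_enum.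
have := on_boundary_mem_crossings (apart _ _ ij) bi bj.
by rewrite mem_cat => /orP[]; apply: crossing; rewrite // eq_sym.
Qed.

Lemma sum_corners_in_le (q : nat) (s : rect R) :
  (forall c, #|[set a | in_rect (F a) c]| <= q)%N ->
  (\sum_a n_corners_in (F a) s <= 4 * q)%N.
Proof.
move=> depth; rewrite sum_count_exchange /=.
apply: (@leq_trans (\sum_(c <- corners s) q)); first exact: leq_sum.
by rewrite big_const_seq /= !mulSn mul0n.
Qed.
End Family.

Theorem lemma3 (R : realType) (q n : nat) (F : 'I_n -> rect R) :
  (2 <= q)%N ->
  (forall i, rect_wf (F i)) ->
  general_position F ->
  (forall i j : 'I_n, i != j -> rects_intersect (F i) (F j) ->
     corner_intersection (F i) (F j)) ->
  (forall S : {set 'I_n},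
     (forall i j, i \in S -> j \in S -> rects_intersect (F i) (F j)) ->
     (#|S| <= q)%N) ->
  exists V : seq (R * R),
    uniq V /\ (forall p, p \in V <-> is_joint F p) /\ (size V <= 4 * q * n)%N.
Proof.
(* The bound does not need q >= 2. *)
move=> _ wf gp corner clique.
have apart i j : i != j -> endpoints_apart (F i) (F j).
  exact: general_position_endpoints_apart.
have depth c : (#|[set a | in_rect (F a) c]| <= q)%N.
  by apply: clique => i j; rewrite !inE => ic jc; exists c; rewrite ic jc.
exists (undup (joint_candidates F)); split; first exact: undup_uniq.
split; first by move=> p; rewrite mem_undup; apply: mem_joint_candidates.
rewrite (leq_trans (size_undup _)) // size_joint_candidates.
apply: (@leq_trans (\sum_a \sum_(b | a != b) n_corners_in (F a) (F b))).
  apply: sum_symmetric_le => [a b | a b ab]; first by rewrite eq_sym.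
  by apply: crossings_le_corners; [apply: wf | apply: wf | apply: apart | apply: corner].
apply: (@leq_trans (\sum_b \sum_a n_corners_in (F a) (F b))).
  rewrite [leqRHS]exchange_big; apply: leq_sum => a _.
  by rewrite big_mkcond; apply: leq_sum => b _; case: ifP.
apply: (@leq_trans (\sum_(b : 'I_n) 4 * q)%N).
  by apply: leq_sum => b _; apply: sum_corners_in_le.
by rewrite sum_nat_const card_ord mulnC.
Qed.
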